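(* Let $\Delta \ge 1$ be odd. There is a port numbering of the complete graph $K_{\Delta+1}$ (nodes anonymous, no orientation) such that every deterministic distributed algorithm (with any number of rounds) that outputs a dominating set outputs all $\Delta+1$ nodes, whereas a single node is a dominating set. Consequently, with anonymous nodes, a port numbering but no orientation, no deterministic distributed algorithm for minimum dominating set on graphs of maximum degree $\Delta$ has approximation factor smaller than $\Delta+1$.
   Context: Model: a graph is a distributed system; every node runs the same deterministic algorithm. Communication is synchronous: in each round every node receives messages from its neighbours, performs local computation, and sends messages to its neighbours. Each node knows its degree and the global degree bound $\Delta$, and nodes have no identifiers. A port numbering means each node $v$ has a fixed bijection between its incident edges and $\{1,\dots,\deg(v)\}$, known to it; messages are sent and received through numbered ports. An algorithm has approximation factor $\alpha$ for minimum dominating set if its output is always a dominating set of size at most $\alpha$ times the minimum. *)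

From HB Require Import structures.
From mathcomp Require Import all_boot all_order all_algebra.
Unset Printing Implicit Defensive.
Import Order.TTheory GRing.Theory Num.Theory.

(* Node v has degree [deg v] and ports
   0, ..., deg v - 1 (the paper's ports 1..deg v, shifted by one).
   [pn v i = (u, j)] means: port i of v is connected to port j of u. *)
Definition valid_pn {V : finType} (deg : V -> nat) (pn : V -> nat -> V * nat) : Prop :=
  (forall v i, i < deg v ->
     (pn v i).2 < deg (pn v i).1 /\
     pn (pn v i).1 (pn v i).2 = (v, i) /\
     (pn v i).1 != v) /\
  (forall v i i', i < deg v -> i' < deg v -> (pn v i).1 = (pn v i').1 -> i = i').

Definition adj {V : finType} (deg : V -> nat) (pn : V -> nat -> V * nat) (v u : V) : bool :=
  [exists i : 'I_(deg v), (pn v i).1 == u].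

Definition dominating {V : finType} (e : V -> V -> bool) (D : {set V}) : bool :=
  [forall v, (v \in D) || [exists u in D, e u v]].

Definition domnum {V : finType} (e : V -> V -> bool) : nat :=
  \big[minn/#|V|]_(D : {set V} | dominating e D) #|D|.

(* A node starts in a state determined by its degree; in each round it sends
   [send s i] through each port i, receives the messages on its ports
   (Some m for a port i < degree, None otherwise) and updates its state. *)
Record Algorithm : Type := Algo {
  St : Type;
  Msg : Type;
  init : nat -> St;
  send : St -> nat -> Msg;
  step : St -> (nat -> option Msg) -> St;
  out : St -> bool
}.

Fixpoint run (A : Algorithm) {V : finType} (deg : V -> nat)
    (pn : V -> nat -> V * nat) (r : nat) : V -> St A :=
  match r with
  | 0 => fun v => init A (deg v)
  | r'.+1 => fun v =>
      let st := run A deg pn r' in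
      step A (st v) (fun i => if i < deg v then
                                Some (send A (st (pn v i).1) (pn v i).2)
                              else None)
  end.

Definition output (A : Algorithm) {V : finType} (deg : V -> nat)
    (pn : V -> nat -> V * nat) (r : nat) : {set V} :=
  [set v | out A (run A deg pn r v)].

Definition has_approx_factor (Delta : nat) (A : Algorithm) (alpha : rat) : Prop :=
  forall (V : finType) (deg : V -> nat) (pn : V -> nat -> V * nat),
    valid_pn deg pn -> (forall v, deg v <= Delta) ->
    exists r : nat,
      dominating (adj deg pn) (output A deg pn r) /\
      ((#|output A deg pn r|)%:R <= alpha * (domnum (adj deg pn))%:R)%R.

(* For odd Delta, the complete graph K_(Delta+1) decomposes into Delta perfect
   matchings (the round-robin 1-factorization). Numbering the edges of the i-th
   matching by port i at both endpoints makes every node receive, in every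
   round, exactly what every other node receives, so all nodes are always in
   the same state. A dominating output is nonempty, hence it is the whole vertex
   set, although a single node already dominates K_(Delta+1). *)

From mathcomp Require Import all_boot all_order all_algebra.
From Stdlib Require Import FunctionalExtensionality.
Import Order.TTheory GRing.Theory Num.Theory.

Section RoundRobin.
Variable D : nat.
Hypothesis D_odd : odd D.

Let D_gt0 : 0 < D. Proof. exact: odd_gt0. Qed.

Lemma halfS_double_mod x : x * D.+1./2 * 2 = x %[mod D].
Proof.
rewrite -mulnA muln2 even_halfK /=; last by rewrite negbK.
by rewrite mulnS addnC modnMDl.
Qed.

Lemma sub_mod_addK i v : v <= D -> (i + D - v) %% D + v = i %[mod D].
Proof.
by move=> vD; rewrite modnDml subnK ?modnDr // (leq_trans vD (leq_addl _ _)).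
Qed.

(* Nodes 0, ..., D - 1 stand for Z/DZ and node D for a point at infinity.
   Colour i joins u and v when u + v = i (mod D), and joins the node i/2 (the
   unique u with 2u = i) to infinity; D.+1./2 is the inverse of 2 modulo D. *)
Definition rr_edge (i u v : nat) : bool :=
  (u != v) &&
  if u == D then v * 2 == i %[mod D]
  else if v == D then u * 2 == i %[mod D]
  else u + v == i %[mod D].

Definition rr_mate (i v : nat) : nat :=
  if v == D then i * D.+1./2 %% D
  else if v * 2 %% D == i then D
  else (i + D - v) %% D.

Lemma rr_edge_sym i u v : rr_edge i u v = rr_edge i v u.
Proof.
rewrite /rr_edge eq_sym.
case: (eqVneq u D) => [->|/negbTE uD]; case: (eqVneq v D) => [->|/negbTE vD];
  by rewrite ?eqxx ?uD ?vD ?andbF // addnC.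
Qed.

Lemma rr_edge_colour_mod i j v u : rr_edge i v u -> rr_edge j v u -> i = j %[mod D].
Proof.
rewrite /rr_edge; case: ifP => _; [|case: ifP => _];
  by move=> /andP[_ /eqP <-] /andP[_ /eqP].
Qed.

Lemma rr_edge_total v u : v != u -> exists2 i, i < D & rr_edge i v u.
Proof.
move=> vu; pose c := if v == D then u * 2 else if u == D then v * 2 else v + u.
exists (c %% D); first by rewrite ltn_mod D_gt0.
by rewrite /rr_edge vu /c modn_mod; case: (v == D); case: (u == D) => /=.
Qed.

Lemma rr_mate_le i v : rr_mate i v <= D.
Proof.
have lt_mod x : x %% D < D by rewrite ltn_mod D_gt0.
rewrite /rr_mate; case: ifP => _; first exact: ltnW.
by case: ifP => _ //; exact: ltnW.
Qed.

Lemma rr_edge_mate i v : i < D -> v <= D -> rr_edge i v (rr_mate i v).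
Proof.
move=> iD vD; rewrite /rr_edge /rr_mate; case: (eqVneq v D) => [->|/negbTE vD'].
  rewrite eq_sym neq_ltn ltn_mod D_gt0 /=.
  by apply/eqP; rewrite modnMml halfS_double_mod.
case: ifP => [/eqP v2|v2]; first by rewrite eqxx vD' /= v2 modn_small.
have wD : (i + D - v) %% D < D by rewrite ltn_mod D_gt0.
rewrite (ltn_eqF wD) (addnC v) sub_mod_addK // eqxx andbT.
apply: contraFN v2 => /eqP vw; apply/eqP.
by rewrite -(modn_small iD) -(sub_mod_addK i v vD) -vw muln2 addnn.
Qed.

Lemma rr_mate_unique i v u :
  i < D -> v <= D -> u <= D -> rr_edge i v u -> u = rr_mate i v.
Proof.
move=> iD vD uD; rewrite /rr_edge /rr_mate.
case: (eqVneq v D) => [->|/negbTE vD'] /=.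
  rewrite eq_sym => /andP[uD' /eqP u2]; have ultD : u < D by rewrite ltn_neqAle uD' uD.
  by rewrite -(modn_small ultD) -(halfS_double_mod u) mulnAC -modnMml u2 modnMml.
case: (eqVneq u D) => [->|/negbTE uD'] /=.
  by case/andP=> _ /eqP ->; rewrite modn_small ?eqxx.
case/andP=> vu /eqP vu_i.
have ultD : u < D by rewrite ltn_neqAle uD' uD.
have vltD : v < D by rewrite ltn_neqAle vD' vD.
case: ifP => [/eqP v2|_].
  suff : v == u by rewrite (negbTE vu).
  rewrite -(modn_small ultD) -(modn_small vltD) -(eqn_modDl v) vu_i -v2.
  by rewrite modn_mod muln2 addnn.
have wD : (i + D - v) %% D < D by rewrite ltn_mod D_gt0.
apply/eqP; rewrite -(modn_small ultD) -(modn_small wD) -(eqn_modDr v) addnC vu_i.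
by rewrite sub_mod_addK.
Qed.

Lemma rr_mate_neq i v : i < D -> v <= D -> rr_mate i v != v.
Proof. by move=> iD vD; case/andP: (rr_edge_mate _ _ iD vD); rewrite eq_sym. Qed.

Lemma rr_mateK i v : i < D -> v <= D -> rr_mate i (rr_mate i v) = v.
Proof.
move=> iD vD; apply/esym/rr_mate_unique; rewrite ?rr_mate_le //.
by rewrite rr_edge_sym rr_edge_mate.
Qed.

Lemma rr_mate_colour_inj i j v :
  i < D -> j < D -> v <= D -> rr_mate i v = rr_mate j v -> i = j.
Proof.
move=> iD jD vD ij; rewrite -(modn_small iD) -(modn_small jD).
apply: (@rr_edge_colour_mod _ _ v (rr_mate i v)); first exact: rr_edge_mate.
by rewrite ij rr_edge_mate.
Qed.

Lemma rr_mate_surj v u :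
  v <= D -> u <= D -> v != u -> exists2 i, i < D & rr_mate i v = u.
Proof.
move=> vD uD /rr_edge_total[i iD vu].
by exists i => //; rewrite (rr_mate_unique _ _ _ iD vD uD vu).
Qed.

End RoundRobin.

Section PortSymmetric.
Variables (A : Algorithm) (V : finType) (d : nat) (pn : V -> nat -> V * nat).
Hypothesis pn_sym : forall v i, (pn v i).2 = i.

Lemma run_port_symmetric r v w :
  run A (fun _ => d) pn r v = run A (fun _ => d) pn r w.
Proof.
elim: r v w => [//|r IHr] v w /=.
rewrite (IHr v w); congr (step A _ _); apply: functional_extensionality => i.
by rewrite !pn_sym (IHr (pn v i).1 w) (IHr (pn w i).1 w).
Qed.

Lemma dominating_output_port_symmetric (e : rel V) r :
  dominating e (output A (fun _ => d) pn r) -> output A (fun _ => d) pn r = setT.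
Proof.
move=> /forallP dom; apply/setP => x; rewrite in_setT.
have /orP[//|/existsP[u /andP[ux _]]] := dom x.
by move: ux; rewrite !inE (run_port_symmetric r u x).
Qed.

End PortSymmetric.

Arguments dominating_output_port_symmetric {A V d pn} pn_sym {e r}.

Lemma domnum_le (V : finType) (e : rel V) (D : {set V}) :
  dominating e D -> domnum e <= #|D|.
Proof. by move=> domD; rewrite /domnum -minEnat -leEnat; apply: bigmin_le_cond. Qed.

Section CompleteGraph.
Variable Delta : nat.
Hypothesis Delta_odd : odd Delta.

Definition rr_pn (v : 'I_Delta.+1) (i : nat) : 'I_Delta.+1 * nat :=
  (inord (rr_mate Delta i v), i).

Let deg (_ : 'I_Delta.+1) := Delta.

Lemma rr_pn_fst v i : val (rr_pn v i).1 = rr_mate Delta i v.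
Proof. by rewrite /= inordK // ltnS rr_mate_le. Qed.

Lemma rr_pn_valid : valid_pn deg rr_pn.
Proof.
split=> [v i iD|v i i' iD i'D /(congr1 val)].
  split=> //; split; last by rewrite -val_eqE rr_pn_fst rr_mate_neq ?leq_ord.
  by congr pair; apply: val_inj; rewrite /= !rr_pn_fst rr_mateK ?leq_ord.
by rewrite !rr_pn_fst; apply: rr_mate_colour_inj; rewrite ?leq_ord.
Qed.

Lemma rr_pn_adj u v : adj deg rr_pn u v = (u != v).
Proof.
apply/existsP/idP => [[i /eqP <-]|uv].
  by rewrite eq_sym -val_eqE rr_pn_fst rr_mate_neq ?leq_ord.
have [i iD uv_i] := @rr_mate_surj _ Delta_odd _ _ (leq_ord u) (leq_ord v) uv.
by exists (Ordinal iD); rewrite -val_eqE rr_pn_fst uv_i.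
Qed.

Lemma rr_pn_dominating_single v : dominating (adj deg rr_pn) [set v].
Proof.
apply/forallP => x; rewrite in_set1; have [//|xv] := eqVneq x v.
by apply/existsP; exists v; rewrite in_set1 eqxx rr_pn_adj eq_sym xv.
Qed.

End CompleteGraph.

Theorem mainTheorem8 (Delta : nat) (hD : 0 < Delta) (hodd : odd Delta) :
  (exists pn : 'I_Delta.+1 -> nat -> 'I_Delta.+1 * nat,
     valid_pn (fun _ => Delta) pn /\
     (forall u v, adj (fun _ => Delta) pn u v = (u != v)) /\
     (forall (A : Algorithm) (r : nat),
        dominating (adj (fun _ => Delta) pn) (output A (fun _ => Delta) pn r) ->
        output A (fun _ => Delta) pn r = setT) /\
     (exists v : 'I_Delta.+1, dominating (adj (fun _ => Delta) pn) [set v])) /\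
  (forall (A : Algorithm) (alpha : rat),
     has_approx_factor Delta A alpha -> ((Delta.+1)%:R <= alpha)%R).
Proof.
split.
  exists (rr_pn Delta); split; first exact: rr_pn_valid.
  split; first exact: rr_pn_adj.
  split; first by move=> A r; apply: dominating_output_port_symmetric.
  by exists ord0; exact: rr_pn_dominating_single.
move=> A alpha approx.
have [r [dom_out]] := approx _ _ _ (rr_pn_valid _ hodd) (fun _ => leqnn Delta).
rewrite (dominating_output_port_symmetric _ dom_out) // cardsT card_ord.
have := @domnum_le _ _ _ (rr_pn_dominating_single _ hodd ord0); rewrite cards1.
by case: (domnum _) => [|[|//]] _; rewrite ?mulr0 ?lern0 ?mulr1.
Qed.
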